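(* Let $S$ be a strongly finitely aligned $0$-left cancellative semigroup with right local units. Let $A$ be an associative $*$-algebra and $\pi:\mathcal H(S)\to A$ a cover-to-join $*$-representation such that $\pi(\mathcal H(S))$ spans $A$; write $\pi_s=\pi(\theta_s)$ for $s\in S$. Then $A$ is spanned by the elements $\pi_s\pi(f_\Lambda)\pi_t^*$ with $\Lambda\subseteq S$ finite and $s,t\in\Lambda$. If moreover $S$ is right reductive and categorical at zero, then $A$ is spanned by the elements $\pi_s\pi_t^*$ with $s,t\in S$.
   Context: $S$ has zero $0$, $S'=S\setminus\{0\}$; $0$-left cancellative: $st=sr\ne0\Rightarrow t=r$; right local units: each $s$ has an idempotent $e$ with $se=s$; right reductive: $sx=tx$ for all $x$ implies $s=t$; categorical at zero: $rs\ne0$, $st\ne0\Rightarrow rst\ne0$. Strongly finitely aligned: for all $s,t\in S$ there is a finite (possibly empty) $B\subseteq S'$ with $sS\cap tS=\bigcup_{b\in B}bS$ (read as $\{0\}$ if $B=\emptyset$) and $bS\cap b'S=\{0\}$ for distinct $b,b'\in B$. For $s\in S$: $F_s=\{x\in S':sx\ne0\}$, $\theta_s:F_s\to sS\setminus\{0\}$, $x\mapsto sx$; $\mathcal H(S)$ is the inverse semigroup of partial bijections of $S'$ generated by the $\theta_s$; for finite $\Lambda\subseteq S$, $f_\Lambda=\prod_{u\in\Lambda}\theta_u^{-1}\theta_u$ (identity on $\bigcap_{u\in\Lambda}F_u$). A $*$-representation is a map $\pi:\mathcal H(S)\to A$ with $\pi(0)=0$, $\pi(gh)=\pi(g)\pi(h)$,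 $\pi(g^{-1})=\pi(g)^*$. For an idempotent $e$ of $\mathcal H(S)$, idempotents $f_1,\dots,f_n\le e$ form a cover of $e$ if every nonzero idempotent $h\le e$ satisfies $hf_i\ne0$ for some $i$. $\pi$ is cover-to-join if for every such cover, $\prod_{i=1}^n(\pi(e)-\pi(f_i))=0$. *)

From HB Require Import structures.
From mathcomp Require Import all_boot all_order all_algebra.
Set Implicit Arguments. Unset Strict Implicit. Unset Printing Implicit Defensive.
Import Order.TTheory GRing.Theory Num.Theory.
Local Open Scope ring_scope.

Record semigroup0 := Semigroup0 {
  scar :> Type;
  sop : scar -> scar -> scar;
  szero : scar;
  sop_assoc : forall a b c, sop a (sop b c) = sop (sop a b) c;
  szero_l : forall a, sop szero a = szero;
  szero_r : forall a, sop a szero = szero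
}.

(** Propositional list membership / "all" (avoids eqType requirements). *)
Fixpoint InL {T : Type} (x : T) (l : seq T) : Prop :=
  match l with [::] => False | y :: l' => y = x \/ InL x l' end.
Fixpoint AllP {T : Type} (P : T -> Prop) (l : seq T) : Prop :=
  match l with [::] => True | y :: l' => P y /\ AllP P l' end.

Section SemigroupDefs.
Variable S : semigroup0.
Local Notation "a ** b" := (sop a b) (at level 40, left associativity).
Local Notation z := (szero S).

Definition zero_left_cancellative : Prop :=
  forall s t r : S, s ** t = s ** r -> s ** t <> z -> t = r.

Definition right_local_units : Prop :=
  forall s : S, exists e : S, e ** e = e /\ s ** e = s.

Definition right_reductive : Prop :=
  forall s t : S, (forall x : S, s ** x = t ** x) -> s = t.

Definition categorical_at_zero : Prop :=
  forall r s t : S, r ** s <> z -> s ** t <> z -> (r ** s) ** t <> z.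

Definition rideal (s : S) (x : S) : Prop := exists y : S, x = s ** y.

(** strongly finitely aligned; the union over an empty B is read as {0} *)
Definition strongly_finitely_aligned : Prop :=
  forall s t : S, exists B : seq S,
    AllP (fun b => b <> z) B /\
    (forall x : S, (rideal s x /\ rideal t x) <->
                   (x = z \/ exists b, InL b B /\ rideal b x)) /\
    (forall b b', InL b B -> InL b' B -> b <> b' ->
       forall x, rideal b x -> rideal b' x -> x = z).

(** * Partial bijections of S' = S \ {0}, represented by their graphs *)
Definition prel := S -> S -> Prop.

Definition Fdom (s : S) (x : S) : Prop := x <> z /\ s ** x <> z.
Definition theta (s : S) : prel := fun x y => Fdom s x /\ y = s ** x.

Definition pcomp (g h : prel) : prel := fun x w => exists y, h x y /\ g y w.
Definition pinv (g : prel) : prel := fun x y => g y x.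
Definition pzero : prel := fun _ _ => False.

Inductive inH : prel -> Prop :=
  | inH_gen s : inH (theta s)
  | inH_comp g h : inH g -> inH h -> inH (pcomp g h)
  | inH_inv g : inH g -> inH (pinv g).

(** f_Lambda = prod_{u in Lambda} theta_u^-1 theta_u = identity on the
    intersection of the F_u, u in Lambda *)
Definition fLam (L : seq S) : prel :=
  fun x y => x = y /\ x <> z /\ AllP (fun u => Fdom u x) L.

Definition idemH (e : prel) : Prop := inH e /\ pcomp e e = e.
Definition leH (f e : prel) : Prop := f = pcomp e f.
Definition is_cover (e : prel) (fs : seq prel) : Prop :=
  idemH e /\ AllP (fun f => idemH f /\ leH f e) fs /\
  (forall h, idemH h -> leH h e -> h <> pzero ->
     exists f, InL f fs /\ pcomp h f <> pzero).

End SemigroupDefs.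

Section StarAlg.
Variables (K : numClosedFieldType) (A : lmodType K)
          (mul : A -> A -> A) (star : A -> A).

Definition is_star_algebra : Prop :=
  (forall a b c, mul a (mul b c) = mul (mul a b) c) /\
  (forall a b c, mul a (b + c) = mul a b + mul a c) /\
  (forall a b c, mul (a + b) c = mul a c + mul b c) /\
  (forall (k : K) a b, mul (k *: a) b = k *: mul a b) /\
  (forall (k : K) a b, mul a (k *: b) = k *: mul a b) /\
  (forall a b, star (a + b) = star a + star b) /\
  (forall (k : K) a, star (k *: a) = (k^*) *: star a) /\
  (forall a, star (star a) = a) /\
  (forall a b, star (mul a b) = mul (star b) (star a)).

Definition in_span (P : A -> Prop) (a : A) : Prop :=
  exists l : seq (K * A), AllP (fun p => P p.2) l /\
                          a = \sum_(p <- l) p.1 *: p.2.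

Variable S : semigroup0.
Variable pi : prel S -> A.

(** *-representation of H(S) (pi only matters on H(S)) *)
Definition is_star_rep : Prop :=
  pi (@pzero S) = 0 /\
  (forall g h, inH g -> inH h -> pi (pcomp g h) = mul (pi g) (pi h)) /\
  (forall g, inH g -> pi (pinv g) = star (pi g)).

(** cover-to-join: for every cover f_1,...,f_n (n >= 1) of e,
    (pi e - pi f_1) ... (pi e - pi f_n) = 0.  (For n = 0 a cover forces
    e = 0, so nothing is lost by requiring n >= 1.) *)
Definition cover_to_join : Prop :=
  forall (e f : prel S) (fs : seq (prel S)), is_cover e (f :: fs) ->
    foldl (fun acc g => mul acc (pi e - pi g)) (pi e - pi f) fs = 0.

End StarAlg.

From Pilot Require Import Defs.
From HB Require Import structures.
From mathcomp Require Import all_boot all_order all_algebra.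
From Stdlib Require Import Classical FunctionalExtensionality PropExtensionality.
Set Implicit Arguments. Unset Strict Implicit.
Import Order.TTheory GRing.Theory Num.Theory.
Local Open Scope ring_scope.

(** Write [sandwich s L t] for θ_s f_L θ_t^-1, the partial bijection
    t y ↦ s y defined when y and all u y (u ∈ L ∪ {s, t}) are nonzero.
    Each θ_s is such a sandwich (θ_s = θ_s f_{s,e} θ_e^-1 for a right local
    unit e of s), sandwiches are closed under inverses, and a product of two
    sandwiches θ_s f_L θ_t^-1 θ_u f_M θ_v^-1 is a sum of sandwiches in A:
    strong finite alignment splits θ_t^-1 θ_u into the maps
    θ_t' f_b θ_u'^-1 with b = t t' = u u' ∈ B, whose domains partition the
    domain of θ_t^-1 θ_u, and cover-to-join turns such a partition into a sum.
    When S is categorical at zero, a sandwich is either 0 or θ_s θ_t^-1. *)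

Lemma AllP_InL T (P : T -> Prop) l : AllP P l <-> (forall x, InL x l -> P x).
Proof.
elim: l => [|y l IH] /=; first by split.
split.
- move=> [Hy /IH Hl] x [<-|Hx]; [done | exact: Hl].
- move=> H; split; [apply: H; by left | apply/IH => x Hx; apply: H; by right].
Qed.

Lemma InL_map T U (f : T -> U) l y :
  InL y (map f l) <-> exists x, InL x l /\ y = f x.
Proof.
elim: l => [|a l IH] /=; first by split => // [[x []]].
split.
- move=> [<-|H]; first by exists a; split; [left|].
  by case: (proj1 IH H) => x [Hx ->]; exists x; split; [right|].
- move=> [x [[<-|Hx] Hy]]; first by left.
  by right; apply: (proj2 IH); exists x.
Qed.

Lemma InL_cat T x (l1 l2 : seq T) : InL x (l1 ++ l2) <-> InL x l1 \/ InL x l2.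
Proof. by elim: l1 => [|a l IH] /=; [split; [right|case] | tauto]. Qed.

Lemma AllP_cat T (P : T -> Prop) l1 l2 :
  AllP P l1 -> AllP P l2 -> AllP P (l1 ++ l2).
Proof.
move=> /AllP_InL H1 /AllP_InL H2; apply/AllP_InL => x /InL_cat [] ?;
  [exact: H1 | exact: H2].
Qed.

Fixpoint PairwiseP {T : Type} (R : T -> T -> Prop) (l : seq T) : Prop :=
  match l with
  | [::] => True
  | x :: l' => (forall y, InL y l' -> R x y) /\ PairwiseP R l'
  end.

Lemma PairwiseP_sub T (R R' : T -> T -> Prop) l :
  (forall a b, InL a l -> InL b l -> R a b -> R' a b) ->
  PairwiseP R l -> PairwiseP R' l.
Proof.
elim: l => [//|x l IH] /= H [H1 H2]; split.
- move=> y Hy; apply: H; [by left | by right | exact: H1].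
- by apply: IH => // a b Ha Hb; apply: H; right.
Qed.

Lemma PairwiseP_map T U (f : T -> U) (R : U -> U -> Prop) l :
  PairwiseP (fun a b => R (f a) (f b)) l -> PairwiseP R (map f l).
Proof.
elim: l => [//|x l IH] /= [H1 H2]; split; last exact: IH.
by move=> y /InL_map [a [Ha ->]]; apply: H1.
Qed.

Lemma exists_uniq_witnesses T U (P : T -> U -> Prop) (B : seq T) :
  (forall b, InL b B -> exists u, P b u) ->
  exists W : seq (T * U),
    (forall p, InL p W -> InL p.1 B /\ P p.1 p.2) /\
    PairwiseP (fun p q => p.1 <> q.1) W /\
    (forall b, InL b B -> exists u, InL (b, u) W).
Proof.
elim: B => [|b B IH] HB; first by exists [::].
have [W [HW [HWu HWc]]] := IH (fun c Hc => HB c (or_intror Hc)).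
case: (classic (exists u, InL (b, u) W)) => [Hb|Hb].
- exists W; split; [|split] => //.
  + by move=> p /HW [Hp HP]; split; [right|].
  + by move=> c /= [<-|/HWc].
- have [u Hu] := HB b (or_introl erefl).
  exists ((b, u) :: W); split; [|split].
  + by move=> p /= [<-|/HW [Hp HP]]; split; [left| |right|].
  + split => // q Hq /= Eq; apply: Hb; exists q.2.
    by rewrite Eq -surjective_pairing.
  + move=> c /= [<-|/HWc [v Hv]]; first by exists u; left.
    by exists v; right.
Qed.

Section PartialMaps.
Variable S : semigroup0.
Local Notation "a ** b" := (sop a b) (at level 40, left associativity).
Local Notation z := (szero S).

Lemma prel_ext (r r' : prel S) : (forall x y, r x y <-> r' x y) -> r = r'.
Proof.
move=> H; apply: functional_extensionality => x.
apply: functional_extensionality => y; apply: propositional_extensionality.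
exact: H.
Qed.

Definition pid (P : S -> Prop) : prel S := fun x y => x = y /\ P x.
Definition pdom (g : prel S) (x : S) : Prop := exists y, g x y.
Definition pfunctional (g : prel S) := forall x y y', g x y -> g x y' -> y = y'.
Definition pinjective (g : prel S) := forall x x' y, g x y -> g x' y -> x = x'.
Definition pdisjoint (g h : prel S) := forall x, pdom g x -> pdom h x -> False.

Lemma eq_pid (P Q : S -> Prop) : (forall x, P x <-> Q x) -> pid P = pid Q.
Proof. by move=> H; apply: prel_ext => x y; rewrite /pid H. Qed.

Lemma pid_pred0 (P : S -> Prop) : (forall x, ~ P x) -> pid P = @pzero S.
Proof. by move=> H; apply: prel_ext => x y; split => // [[_ /H]]. Qed.

Lemma pcompA (f g h : prel S) :
  Defs.pcomp f (Defs.pcomp g h) = Defs.pcomp (Defs.pcomp f g) h.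
Proof.
apply: prel_ext => x w; split.
- by move=> [y [[q [Hhq Hgy]] Hfw]]; exists q; split=> //; exists y.
- by move=> [q [Hhq [y [Hgy Hfw]]]]; exists y; split=> //; exists q.
Qed.

Lemma pcomp_pid (P Q : S -> Prop) :
  Defs.pcomp (pid P) (pid Q) = pid (fun x => P x /\ Q x).
Proof.
apply: prel_ext => x w; split; first by move=> [y [[<- Hq] [<- Hp]]].
by move=> [<- [Hp Hq]]; exists x.
Qed.

Lemma pcomp_pidE (g : prel S) (P : S -> Prop) x y :
  Defs.pcomp g (pid P) x y <-> P x /\ g x y.
Proof. by split; [move=> [q [[<- Hp] Hg]] | move=> [Hp Hg]; exists x]. Qed.

Lemma pcomp_pinv_l (g : prel S) :
  pinjective g -> Defs.pcomp (pinv g) g = pid (pdom g).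
Proof.
move=> ig; apply: prel_ext => x w; split.
- by move=> [y [H1 H2]]; split; [exact: ig H1 H2 | exists y].
- by move=> [<- [y Hy]]; exists y.
Qed.

Lemma nz_r (a b : S) : a ** b <> z -> b <> z.
Proof. by move=> H Hb; apply: H; rewrite Hb szero_r. Qed.

Definition sandwich (s : S) (L : seq S) (t : S) : prel S :=
  Defs.pcomp (theta s) (Defs.pcomp (fLam L) (pinv (theta t))).

Lemma sandwichP s L t x w : sandwich s L t x w <->
  exists y, [/\ x = t ** y, y <> z, t ** y <> z,
                (forall u, InL u L -> u ** y <> z) & s ** y <> z /\ w = s ** y].
Proof.
split.
- move=> [q [[y [[[Hy Hty] Hx] [<- [_ /AllP_InL HL]]]] [[_ Hsq] Hw]]].
  by exists y; split=> // u /HL [].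
- move=> [y [Hx Hy Hty HL [Hsy Hw]]].
  exists y; split; last by split.
  exists y; split=> //; split=> //; split=> //.
  by apply/AllP_InL => u Hu; split; last exact: HL.
Qed.

Lemma pinv_sandwich s L t : pinv (sandwich s L t) = sandwich t L s.
Proof.
by apply: prel_ext => x w; rewrite /pinv !sandwichP;
  split=> -[y [? ? ? ? [? ?]]]; exists y.
Qed.

Lemma theta_fLamP s L q w : Defs.pcomp (theta s) (fLam L) q w <->
  [/\ q <> z, forall u, InL u L -> u ** q <> z, s ** q <> z & w = s ** q].
Proof.
split.
- by move=> [y [[<- [Hq /AllP_InL HL]] [[_ Hs] ->]]]; split=> // u /HL [].
- move=> [Hq HL Hs ->]; exists q; split=> //; split=> //; split=> //.
  by apply/AllP_InL => u Hu; split; last exact: HL.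
Qed.

Lemma fLam_thetaVP M v x r : Defs.pcomp (fLam M) (pinv (theta v)) x r <->
  [/\ x = v ** r, r <> z, v ** r <> z & forall u, InL u M -> u ** r <> z].
Proof.
split.
- by move=> [y [[[Hy Hvy] Hx] [<- [_ /AllP_InL HM]]]]; split=> // u /HM [].
- move=> [Hx Hr Hv HM]; exists r; split; first by split.
  split=> //; split=> //.
  by apply/AllP_InL => u Hu; split; last exact: HM.
Qed.

Lemma sandwich_mul s L t' N u' M v :
  Defs.pcomp (Defs.pcomp (theta s) (fLam L))
    (Defs.pcomp (sandwich t' N u') (Defs.pcomp (fLam M) (pinv (theta v))))
  = sandwich (s ** t') (map (fun l => l ** t') L ++ N ++ map (fun m => m ** u') M)
      (v ** u').
Proof.
apply: prel_ext => x w; rewrite sandwichP; split.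
- move=> [q [[r [/fLam_thetaVP [Hx Hr Hvr HM] /sandwichP [y [Hry Hy Huy HN [Hty Hq]]]]]
     /theta_fLamP [Hq0 HL Hsq Hw]]].
  subst; exists y; rewrite -!sop_assoc; split=> // k.
  move=> /InL_cat [/InL_map [l [Hl ->]]|/InL_cat [Hk|/InL_map [m [Hm ->]]]].
  + by rewrite -sop_assoc; apply: HL.
  + exact: HN.
  + by rewrite -sop_assoc; apply: HM.
- move=> [y [Hx Hy Hvy HK [Hsy Hw]]].
  rewrite -sop_assoc in Hvy; rewrite -sop_assoc in Hsy.
  have HL l : InL l L -> l ** (t' ** y) <> z.
    move=> Hl; rewrite sop_assoc; apply: HK; apply/InL_cat; left.
    by apply/InL_map; exists l.
  have HM m : InL m M -> m ** (u' ** y) <> z.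
    move=> Hm; rewrite sop_assoc; apply: HK; do 2!(apply/InL_cat; right).
    by apply/InL_map; exists m.
  have HN n : InL n N -> n ** y <> z.
    by move=> Hn; apply: HK; apply/InL_cat; right; apply/InL_cat; left.
  have Hty := nz_r Hsy; have Huy := nz_r Hvy.
  exists (t' ** y); split; last by apply/theta_fLamP; rewrite Hw -sop_assoc.
  exists (u' ** y); split; first by apply/fLam_thetaVP; rewrite Hx -sop_assoc.
  by apply/sandwichP; exists y; split=> //; split=> //; exact: nz_r Hsy.
Qed.

End PartialMaps.

Section LeftCancellative.
Variable S : semigroup0.
Local Notation "a ** b" := (sop a b) (at level 40, left associativity).
Local Notation z := (szero S).
Hypothesis hLC : zero_left_cancellative S.

Lemma right_unit_act (s e x : S) : s ** e = s -> s ** x <> z -> e ** x = x.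
Proof. by move=> Hse Hsx; apply: (@hLC s); rewrite sop_assoc Hse. Qed.

Lemma theta_sandwich (s e : S) : s ** e = s -> theta s = sandwich s [:: s; e] e.
Proof.
move=> Hse; apply: prel_ext => x w; rewrite sandwichP; split.
- move=> [[Hx Hsx] ->]; have Hex := right_unit_act Hse Hsx.
  by exists x; rewrite Hex; split=> // u /= [<-|[<-|[]]]; rewrite ?Hex.
- move=> [y [-> Hy Hey _ [Hsy ->]]].
  by rewrite /theta /Fdom sop_assoc Hse.
Qed.

Lemma fLam1 (u : S) : fLam [:: u] = Defs.pcomp (pinv (theta u)) (theta u).
Proof.
apply: prel_ext => x y; split.
- by move=> [<- [Hx [[_ Hux] _]]]; exists (u ** x).
- move=> [q [[[Hx Hux] ->] [[Hy Huy] Hq]]].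
  by have <- := hLC Hq Hux.
Qed.

Lemma fLam_cons (u : S) L : fLam (u :: L) = Defs.pcomp (fLam [:: u]) (fLam L).
Proof.
apply: prel_ext => x y; split.
- by move=> [<- [Hx [Hu HL]]]; exists x.
- by move=> [q [[<- [Hx HL]] [<- [_ [Hu _]]]]].
Qed.

Lemma inH_fLam (L : seq S) : L <> [::] -> inH (fLam L).
Proof.
have Hu (u : S) : inH (fLam [:: u]).
  by rewrite fLam1; apply: inH_comp; [apply: inH_inv|]; apply: inH_gen.
elim: L => [//|u [|v L] IH] _ //.
by rewrite fLam_cons; apply: inH_comp => //; apply: IH.
Qed.

Lemma inH_sandwich (s : S) L t : L <> [::] -> inH (sandwich s L t).
Proof.
move=> HL; apply: inH_comp; first exact: inH_gen.
by apply: inH_comp; [exact: inH_fLam | apply: inH_inv; exact: inH_gen].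
Qed.

Lemma inH_pbij (g : prel S) : inH g -> pfunctional g /\ pinjective g.
Proof.
elim=> {g} [s|g h _ [fg ig] _ [fh ih]|g _ [fg ig]].
- split; first by move=> x y y' [_ ->] [_ ->].
  by move=> x x' y [[Hx Hsx] ->] [_ Hy]; apply: (@hLC s).
- split.
  + move=> x w w' [y1 [H1 G1]] [y2 [H2 G2]].
    by move: G2; rewrite -(fh _ _ _ H1 H2); apply: fg.
  + move=> x x' w [y1 [H1 G1]] [y2 [H2 G2]].
    by move: H2; rewrite -(ig _ _ _ G1 G2); apply: ih.
- by split=> x y y' H1 H2; [exact: ig H1 H2 | exact: fg H1 H2].
Qed.

Lemma pcomp_pinv_inH (g : prel S) :
  inH g -> Defs.pcomp (pinv g) g = pid (pdom g).
Proof. by move=> Hg; apply: pcomp_pinv_l; exact: (inH_pbij Hg).2. Qed.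

Lemma inH_pid_pdom (g : prel S) : inH g -> inH (pid (pdom g)).
Proof.
by move=> Hg; rewrite -pcomp_pinv_inH //; apply: inH_comp => //; apply: inH_inv.
Qed.

Lemma idemH_pid_pdom (g : prel S) : inH g -> idemH (pid (pdom g)).
Proof.
move=> Hg; split; first exact: inH_pid_pdom.
by rewrite pcomp_pid; apply: eq_pid => x; tauto.
Qed.

Lemma is_cover_pdom (g : prel S) (hs : seq (prel S)) :
  inH g -> (forall h, InL h hs -> inH h) ->
  (forall h, InL h hs -> forall x y, h x y -> g x y) ->
  (forall x, pdom g x -> exists h, InL h hs /\ pdom h x) ->
  is_cover (pid (pdom g)) (map (fun h => pid (pdom h)) hs).
Proof.
move=> Hg Hhs hsub hcov; split; first exact: idemH_pid_pdom.
split.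
  apply/AllP_InL => _ /InL_map [h [Hh ->]].
  split; first exact: idemH_pid_pdom (Hhs h Hh).
  rewrite /leH pcomp_pid; apply: eq_pid => x; split; last by case.
  by move=> [w Hw]; split; exists w => //; exact: hsub Hw.
move=> k [_ Hkk] Hke Hk0.
have [x [w Hxw]] : exists x w, k x w.
  apply: NNPP => Hn; apply: Hk0; apply: prel_ext => x w; split=> // Hxw.
  by apply: Hn; exists x, w.
(* idempotence of k moves the point into the domain of g *)
rewrite -Hkk in Hxw; case: Hxw => y [Hxy Hyw].
have Hgy : pdom g y by move: Hxy; rewrite Hke => -[q [_ [<-]]].
have [h [Hh Hhy]] := hcov y Hgy.
exists (pid (pdom h)); split; first by apply/InL_map; exists h.
have : Defs.pcomp k (pid (pdom h)) y w by apply/pcomp_pidE.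
by move=> Hk Hz; rewrite Hz in Hk.
Qed.

Lemma sandwich_sub_thetaV_theta (t u b t' u' : S) :
  b = t ** t' -> b = u ** u' ->
  forall x w, sandwich t' [:: b] u' x w ->
  Defs.pcomp (pinv (theta t)) (theta u) x w.
Proof.
move=> Htb Hub x w /sandwichP [y [-> Hy Huy HL [Hty ->]]].
have Hby : b ** y <> z by apply: HL; left.
by exists (b ** y); rewrite /pinv /theta /Fdom !sop_assoc -Htb -Hub.
Qed.

Lemma thetaV_theta_partition (hRLU : right_local_units S)
    (hSFA : strongly_finitely_aligned S) (t u : S) :
  exists hs : seq (prel S),
    [/\ forall h, InL h hs -> exists b t' u', h = sandwich t' [:: b] u',
        forall h, InL h hs -> forall x w, h x w ->
          Defs.pcomp (pinv (theta t)) (theta u) x w,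
        forall x, pdom (Defs.pcomp (pinv (theta t)) (theta u)) x ->
          exists h, InL h hs /\ pdom h x
      & PairwiseP (@pdisjoint S) hs].
Proof.
have [B [_ [HtuB HBdisj]]] := hSFA t u.
have HBw b : InL b B -> exists p : S * S, b = t ** p.1 /\ b = u ** p.2.
  move=> Hb; have [e [_ Hbe]] := hRLU b.
  have [[t' Ht'] [u' Hu']] : rideal t b /\ rideal u b.
    by apply/HtuB; right; exists b; split=> //; exists e.
  by exists (t', u').
have [W [HW [HWu HWc]]] := exists_uniq_witnesses HBw.
exists (map (fun p => sandwich p.2.1 [:: p.1] p.2.2) W); split.
- by move=> _ /InL_map [p [Hp ->]]; exists p.1, p.2.1, p.2.2.
- move=> _ /InL_map [[b [t' u']] [Hp ->]].
  by have [_ [Htb Hub]] := HW _ Hp; exact: sandwich_sub_thetaV_theta.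
- move=> x [w [_ [[[Hx Hux] ->] [[Hw Htw] Hq]]]].
  have : rideal t (u ** x) /\ rideal u (u ** x) by split; [exists w | exists x].
  move/HtuB => [//|[b [Hb [y Hy]]]].
  have [[t' u'] Hp] := HWc b Hb; have [_ [/= Htb Hub]] := HW _ Hp.
  exists (sandwich t' [:: b] u'); split; first by apply/InL_map; exists (b, (t', u')).
  have Hby : b ** y <> z by rewrite -Hy.
  have Hx' : x = u' ** y by apply: (@hLC u) => //; rewrite sop_assoc -Hub -Hy.
  exists (t' ** y); apply/sandwichP; exists y.
  split=> //; first exact: nz_r Hby.
  - by apply: (@nz_r _ u); rewrite sop_assoc -Hub.
  - by move=> v [<-|[]].
  - by split=> //; apply: (@nz_r _ t); rewrite sop_assoc -Htb.
- apply: PairwiseP_map; apply: PairwiseP_sub HWu.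
  move=> -[b [t' u']] [c [t'' u'']] Hp Hp' /= Hbc x.
  move=> [w /sandwichP [y [Hx _ _ HL _]]] [w' /sandwichP [y' [Hx' _ _ _ _]]].
  have [_ [_ /= Hub]] := HW _ Hp; have [_ [_ /= Huc]] := HW _ Hp'.
  apply: (HL b); first by left.
  apply: (HBdisj b c) => //; [exact: (HW _ Hp).1 | exact: (HW _ Hp').1 | by exists y |].
  by exists y'; rewrite Hub -sop_assoc -Hx Hx' sop_assoc -Huc.
Qed.

(* Split on whether some l ∈ L kills the right local unit e of s: if so the
   sandwich is empty, otherwise categoricity gives l y = l (e y) <> 0. *)
Lemma sandwich_cases (hRLU : right_local_units S)
    (hcat : categorical_at_zero S) s L t :
  sandwich s L t = @pzero S \/
  sandwich s L t = Defs.pcomp (theta s) (pinv (theta t)).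
Proof.
have [e [_ Hse]] := hRLU s.
case: (classic (exists l, InL l L /\ l ** e = z)) => [[l [Hl Hle]]|Hn].
- left; apply: prel_ext => x w; split=> //.
  move=> /sandwichP [y [_ _ _ HL [Hsy _]]].
  by apply: (HL l Hl); rewrite -(right_unit_act Hse Hsy) sop_assoc Hle szero_l.
- right; apply: prel_ext => x w; rewrite sandwichP; split.
  + by move=> [y [Hx Hy Hty _ [Hsy Hw]]]; exists y.
  + move=> [y [[[Hy Hty] Hx] [[_ Hsy] Hw]]]; exists y; split=> // l Hl.
    have Hey := right_unit_act Hse Hsy.
    have Hle : l ** e <> z by move=> E; apply: Hn; exists l.
    by rewrite -Hey sop_assoc; apply: hcat; rewrite ?Hey.
Qed.

End LeftCancellative.

Section StarAlgebra.
Variables (K : numClosedFieldType) (A : lmodType K)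
          (mul : A -> A -> A) (star : A -> A).
Hypothesis hA : is_star_algebra mul star.

Lemma amulA a b c : mul a (mul b c) = mul (mul a b) c.
Proof. by case: hA. Qed.
Lemma amulDr a b c : mul a (b + c) = mul a b + mul a c.
Proof. by case: hA => _ []. Qed.
Lemma amulDl a b c : mul (a + b) c = mul a c + mul b c.
Proof. by case: hA => _ [_ []]. Qed.
Lemma amulZl (k : K) a b : mul (k *: a) b = k *: mul a b.
Proof. by case: hA => _ [_ [_ []]]. Qed.
Lemma amulZr (k : K) a b : mul a (k *: b) = k *: mul a b.
Proof. by case: hA => _ [_ [_ [_ []]]]. Qed.
Lemma astarD a b : star (a + b) = star a + star b.
Proof. by case: hA => _ [_ [_ [_ [_ []]]]]. Qed.
Lemma astarZ (k : K) a : star (k *: a) = k^* *: star a.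
Proof. by case: hA => _ [_ [_ [_ [_ [_ []]]]]]. Qed.

Lemma amul0l c : mul 0 c = 0.
Proof. by have := amulZl 0 0 c; rewrite !scale0r. Qed.
Lemma amul0r c : mul c 0 = 0.
Proof. by have := amulZr 0 c 0; rewrite !scale0r. Qed.
Lemma astar0 : star 0 = 0.
Proof. by have := astarZ 0 0; rewrite conjC0 !scale0r. Qed.
Lemma amulBl a b c : mul (a - b) c = mul a c - mul b c.
Proof. by rewrite amulDl -scaleN1r amulZl scaleN1r. Qed.
Lemma amulBr a b c : mul c (a - b) = mul c a - mul c b.
Proof. by rewrite amulDr -scaleN1r amulZr scaleN1r. Qed.

Lemma amul_suml T (r : seq T) (F : T -> A) c :
  mul (\sum_(i <- r) F i) c = \sum_(i <- r) mul (F i) c.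
Proof. by elim: r => [|a r IH]; rewrite ?big_nil ?amul0l // !big_cons amulDl IH. Qed.
Lemma amul_sumr T (r : seq T) (F : T -> A) c :
  mul c (\sum_(i <- r) F i) = \sum_(i <- r) mul c (F i).
Proof. by elim: r => [|a r IH]; rewrite ?big_nil ?amul0r // !big_cons amulDr IH. Qed.

Lemma eq_big_InL T (r : seq T) (F F' : T -> A) :
  (forall i, InL i r -> F i = F' i) -> \sum_(i <- r) F i = \sum_(i <- r) F' i.
Proof.
elim: r => [|a r IH] H; first by rewrite !big_nil.
by rewrite !big_cons H; [rewrite IH // => i Hi; apply: H; right | left].
Qed.

(* The accumulator is generalized to E - (sum over ps) for the induction. *)
Lemma foldl_mul_sub_orthogonal T (F : T -> A) (E : A) (ps qs : seq T) :
  mul E E = E ->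
  (forall x, InL x (ps ++ qs) -> mul (F x) E = F x /\ mul E (F x) = F x) ->
  (forall p q, InL p ps -> InL q qs -> mul (F p) (F q) = 0) ->
  PairwiseP (fun p q => mul (F p) (F q) = 0) qs ->
  foldl (fun acc g => mul acc (E - F g)) (E - \sum_(p <- ps) F p) qs
  = E - \sum_(p <- ps ++ qs) F p.
Proof.
elim: qs ps => [|q qs IH] ps HE Hid Hpq Hpw /=; first by rewrite cats0.
have Hq : InL q (ps ++ q :: qs) by apply/InL_cat; right; left.
have -> : mul (E - \sum_(p <- ps) F p) (E - F q) = E - \sum_(p <- ps ++ [:: q]) F p.
  rewrite amulBl !amulBr HE !amul_suml (proj2 (Hid q Hq)).
  rewrite (@eq_big_InL _ _ (fun i => mul (F i) E) F); last first.
    by move=> i Hi; apply: (proj1 (Hid i _)); apply/InL_cat; left.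
  rewrite (@eq_big_InL _ _ (fun i => mul (F i) (F q)) (fun _ => 0)); last first.
    by move=> i Hi; apply: Hpq => //; left.
  by rewrite big1_eq subr0 big_cat big_seq1 opprD addrA addrAC.
rewrite IH //.
- by rewrite -catA.
- by move=> x Hx; apply: Hid; rewrite -cat_rcons -cats1.
- move=> p q' /InL_cat [Hp|[<-|[]]] Hq'; last exact: (proj1 Hpw).
  by apply: Hpq => //; right.
- exact: (proj2 Hpw).
Qed.

Local Notation span := (in_span (A:=A)).

Lemma span0 P : span P 0.
Proof. by exists [::]; rewrite big_nil. Qed.

Lemma span_gen (P : A -> Prop) a : P a -> span P a.
Proof. by move=> Pa; exists [:: (1, a)]; split; [split | rewrite big_seq1 scale1r]. Qed.

Lemma span_add P a b : span P a -> span P b -> span P (a + b).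
Proof.
move=> [la [Ha ->]] [lb [Hb ->]]; exists (la ++ lb).
by rewrite big_cat; split; first exact: AllP_cat.
Qed.

Lemma span_scale P (k : K) a : span P a -> span P (k *: a).
Proof.
move=> [la [/AllP_InL Ha ->]]; exists (map (fun p => (k * p.1, p.2)) la); split.
- by apply/AllP_InL => x /InL_map [y [Hy ->]]; exact: Ha Hy.
- by rewrite big_map scaler_sumr; apply: eq_bigr => p _; rewrite scalerA.
Qed.

Lemma span_sum P T (r : seq T) (F : T -> A) :
  (forall i, InL i r -> span P (F i)) -> span P (\sum_(i <- r) F i).
Proof.
elim: r => [|a r IH] H; first by rewrite big_nil; exact: span0.
rewrite big_cons; apply: span_add; first by apply: H; left.
by apply: IH => i Hi; apply: H; right.
Qed.

Lemma span_semilinear (f : A -> A) P Q a :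
  (forall x y, f (x + y) = f x + f y) ->
  (forall (k : K) x, exists k', f (k *: x) = k' *: f x) ->
  f 0 = 0 -> (forall p, P p -> span Q (f p)) -> span P a -> span Q (f a).
Proof.
move=> fD fZ f0 H [l [Hl ->]]; elim: l Hl => [|p l IH] /= Hl.
  by rewrite big_nil f0; exact: span0.
case: Hl => Hp Hl; rewrite big_cons fD; apply: span_add; last exact: IH.
by case: (fZ p.1 p.2) => k' ->; apply: span_scale; exact: H.
Qed.

Lemma span_trans P Q a : (forall p, P p -> span Q p) -> span P a -> span Q a.
Proof. by apply: (@span_semilinear id) => // k x; exists k. Qed.

Lemma span_mul P Q R a b : (forall p q, P p -> Q q -> span R (mul p q)) ->
  span P a -> span Q b -> span R (mul a b).
Proof.
move=> H Ha Hb; apply: (@span_semilinear (mul^~ b) P) Ha.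
- by move=> x y; rewrite amulDl.
- by move=> k x; exists k; rewrite amulZl.
- exact: amul0l.
move=> p Pp; apply: (@span_semilinear (mul p) Q) Hb.
- by move=> x y; rewrite amulDr.
- by move=> k x; exists k; rewrite amulZr.
- exact: amul0r.
by move=> q Qq; exact: H.
Qed.

Lemma span_star P Q a :
  (forall p, P p -> span Q (star p)) -> span P a -> span Q (star a).
Proof.
move=> H; apply: span_semilinear => //; first exact: astarD.
  by move=> k x; exists k^*; exact: astarZ.
exact: astar0.
Qed.

End StarAlgebra.

Section Representation.
Variable S : semigroup0.
Local Notation "a ** b" := (sop a b) (at level 40, left associativity).
Hypotheses (hLC : zero_left_cancellative S) (hRLU : right_local_units S).
Variables (K : numClosedFieldType) (A : lmodType K)
          (mul : A -> A -> A) (star : A -> A).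
Hypothesis hA : is_star_algebra mul star.
Variable pi : prel S -> A.
Hypotheses (hpi : is_star_rep mul star pi) (hctj : cover_to_join mul pi).
Hypothesis hSFA : strongly_finitely_aligned S.

Lemma pi0 : pi (@pzero S) = 0. Proof. by case: hpi. Qed.
Lemma piM g h : inH g -> inH h -> pi (Defs.pcomp g h) = mul (pi g) (pi h).
Proof. by case: hpi => _ [H _]; apply: H. Qed.
Lemma piV g : inH g -> pi (pinv g) = star (pi g).
Proof. by case: hpi => _ [_ H]; apply: H. Qed.

Section DisjointUnion.
Variables (g : prel S) (hs : seq (prel S)).
Hypotheses (Hg : inH g) (Hhs : forall h, InL h hs -> inH h).
Hypothesis hsub : forall h, InL h hs -> forall x y, h x y -> g x y.
Hypothesis hcov : forall x, pdom g x -> exists h, InL h hs /\ pdom h x.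
Hypothesis hdisj : PairwiseP (@pdisjoint S) hs.

Lemma pi_pid_pdom_sum : pi (pid (pdom g)) = \sum_(h <- hs) pi (pid (pdom h)).
Proof.
have Hcover := is_cover_pdom hLC Hg Hhs hsub hcov.
case: hs Hhs hsub hcov hdisj Hcover => [|h0 hs'] Hhs' hsub' hcov' hdisj' Hcover'.
  rewrite big_nil -pi0; congr pi; apply: pid_pred0 => x Hx.
  by have [h [[] _]] := hcov' x Hx.
set Pd := fun h : prel S => pid (pdom h).
have HPg : inH (Pd g) := inH_pid_pdom hLC Hg.
have HPd h : InL h (h0 :: hs') -> inH (Pd h) by move/Hhs'; exact: inH_pid_pdom.
have HPd_absorb h : InL h (h0 :: hs') ->
    Defs.pcomp (Pd g) (Pd h) = Pd h /\ Defs.pcomp (Pd h) (Pd g) = Pd h.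
  move=> Hh; rewrite /Pd !pcomp_pid.
  have Hhg x : pdom h x -> pdom g x by case=> w /(hsub' h Hh); exists w.
  by split; apply: eq_pid => x; intuition.
have Horth : PairwiseP (fun a b => mul (pi a) (pi b) = 0) (map Pd (h0 :: hs')).
  apply: PairwiseP_map; apply: PairwiseP_sub hdisj' => a b Ha Hb Hab.
  rewrite -piM; [|exact: HPd|exact: HPd].
  rewrite /Pd pcomp_pid pid_pred0 ?pi0 // => x [Hxa Hxb].
  exact: Hab Hxa Hxb.
have := hctj Hcover'.
have := foldl_mul_sub_orthogonal hA (F := pi) (E := pi (Pd g))
  (ps := [:: Pd h0]) (qs := map Pd hs').
rewrite big_seq1 => ->.
- by move/eqP; rewrite subr_eq0 cat1s -/(map Pd (h0 :: hs')) big_map => /eqP.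
- by rewrite -piM // /Pd pcomp_pid; congr pi; apply: eq_pid => x; tauto.
- move=> a Ha; have /InL_map [h [Hh ->]] : InL a (map Pd (h0 :: hs')) by [].
  by have HPh := HPd h Hh; rewrite -!piM //; case: (HPd_absorb h Hh) => -> ->.
- by move=> p q [<-|[]]; exact: Horth.1.
- exact: Horth.2.
Qed.

Lemma pi_disjoint_union : pi g = \sum_(h <- hs) pi h.
Proof.
have [fg _] := inH_pbij hLC Hg.
have -> : g = Defs.pcomp g (pid (pdom g)).
  apply: prel_ext => x w; rewrite pcomp_pidE.
  by split=> [Hxw|[]//]; split=> //; exists w.
rewrite piM //; last exact: inH_pid_pdom.
rewrite pi_pid_pdom_sum (amul_sumr hA).
apply: eq_big_InL => h Hh; have HPh := inH_pid_pdom hLC (Hhs Hh).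
rewrite -piM //; congr pi.
apply: prel_ext => x w; rewrite pcomp_pidE; split.
- by move=> [[w' Hw'] Hxw]; rewrite (fg _ _ _ Hxw (hsub Hh Hw')).
- by move=> Hw; split; [exists w | exact: (hsub Hh Hw)].
Qed.

End DisjointUnion.

Lemma pi_sandwich s L t : L <> [::] ->
  pi (sandwich s L t) = mul (mul (pi (theta s)) (pi (fLam L))) (star (pi (theta t))).
Proof.
move=> HL; have HfL := inH_fLam hLC HL.
have Htheta (a : S) : inH (theta a) := inH_gen a.
have HthetaV (a : S) : inH (pinv (theta a)) := inH_inv (Htheta a).
rewrite /sandwich piM //; last exact: inH_comp.
by rewrite piM // piV // (amulA hA).
Qed.

Definition sandwich_image (a : A) : Prop :=
  exists s L t, [/\ InL s L, InL t L & a = pi (sandwich s L t)].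

Lemma span_sandwich_image_mul p q :
  sandwich_image p -> sandwich_image q -> in_span sandwich_image (mul p q).
Proof.
move=> [s [L [t [HsL HtL ->]]]] [u [M [v [HuM HvM ->]]]].
have HL : L <> [::] by case: L HsL HtL.
have HM : M <> [::] by case: M HuM HvM.
have Htheta (a : S) : inH (theta a) := inH_gen a.
have HthetaV (a : S) : inH (pinv (theta a)) := inH_inv (Htheta a).
have HX : inH (Defs.pcomp (theta s) (fLam L)).
  by apply: inH_comp => //; exact: inH_fLam.
have HY : inH (Defs.pcomp (fLam M) (pinv (theta v))).
  by apply: inH_comp => //; exact: inH_fLam.
have Hg : inH (Defs.pcomp (pinv (theta t)) (theta u)) by apply: inH_comp.
rewrite -piM; try exact: inH_sandwich.
have -> : Defs.pcomp (sandwich s L t) (sandwich u M v) =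
    Defs.pcomp (Defs.pcomp (theta s) (fLam L))
      (Defs.pcomp (Defs.pcomp (pinv (theta t)) (theta u))
         (Defs.pcomp (fLam M) (pinv (theta v)))).
  by rewrite /sandwich !pcompA.
have [hs [Hhs hsub hcov hdisj]] := thetaV_theta_partition hLC hRLU hSFA t u.
have Hhs' h : InL h hs -> inH h.
  by move=> /Hhs [b [t' [u' ->]]]; exact: inH_sandwich.
have HgY := inH_comp Hg HY.
rewrite (piM HX HgY) (piM Hg HY).
rewrite (pi_disjoint_union Hg Hhs' hsub hcov hdisj) (amul_suml hA) (amul_sumr hA).
apply: span_sum => h Hh; have [b [t' [u' Eh]]] := Hhs h Hh.
have HhY := inH_comp (Hhs' h Hh) HY.
rewrite -(piM (Hhs' h Hh) HY) -(piM HX HhY).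
rewrite Eh sandwich_mul; apply: span_gen.
exists (s ** t'), (map (fun l => l ** t') L ++ [:: b] ++ map (fun m => m ** u') M),
  (v ** u').
split=> //.
- by apply/InL_cat; left; apply/InL_map; exists s.
- by do 2!(apply/InL_cat; right); apply/InL_map; exists v.
Qed.

Lemma span_sandwich_image_inH g :
  inH g -> in_span sandwich_image (pi g).
Proof.
elim=> {g} [s|g h Hg IHg Hh IHh|g Hg IH].
- have [e [_ Hse]] := hRLU s.
  rewrite (theta_sandwich hLC Hse); apply: span_gen; exists s, [:: s; e], e.
  by split; [left | right; left |].
- rewrite piM //; apply: (span_mul hA) IHg IHh; exact: span_sandwich_image_mul.
- rewrite piV //; apply: (span_star hA) IH => _ [s [L [t [HsL HtL ->]]]].
  rewrite -piV; last by apply: inH_sandwich; case: L HsL HtL.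
  by rewrite pinv_sandwich; apply: span_gen; exists t, L, s.
Qed.

End Representation.

Unset Implicit Arguments.

Theorem theorem15p17
  (S : semigroup0)
  (hSFA : strongly_finitely_aligned S)
  (hLC : zero_left_cancellative S)
  (hRLU : right_local_units S)
  (K : numClosedFieldType) (A : lmodType K)
  (mul : A -> A -> A) (star : A -> A)
  (hA : is_star_algebra mul star)
  (pi : prel S -> A)
  (hpi : is_star_rep mul star pi)
  (hctj : cover_to_join mul pi)
  (hspan : forall a : A, in_span (fun b => exists g, inH g /\ b = pi g) a) :
  (forall a : A,
     in_span (fun b => exists (L : seq S) (s t : S),
                InL s L /\ InL t L /\
                b = mul (mul (pi (theta s)) (pi (fLam L))) (star (pi (theta t)))) a)
  /\
  (right_reductive S -> categorical_at_zero S ->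
   forall a : A,
     in_span (fun b => exists s t : S, b = mul (pi (theta s)) (star (pi (theta t)))) a).
Proof.
have Hsand a : in_span (sandwich_image pi) a.
  apply: (span_trans _ (hspan a)) => _ [g [Hg ->]].
  exact: (span_sandwich_image_inH hLC hRLU hA hpi hctj hSFA Hg).
split.
- move=> a; apply: (span_trans _ (Hsand a)) => _ [s [L [t [HsL HtL ->]]]].
  apply: span_gen; exists L, s, t; do 2!split=> //.
  by apply: (pi_sandwich hLC hA hpi s t); case: L HsL HtL.
- move=> _ hcat a; apply: (span_trans _ (Hsand a)) => _ [s [L [t [_ _ ->]]]].
  have [-> | ->] := sandwich_cases hLC hRLU hcat s L t.
  + by rewrite (pi0 hpi); exact: span0.
  + rewrite (piM hpi (inH_gen s) (inH_inv (inH_gen t))) (piV hpi (inH_gen t)).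
    by apply: span_gen; exists s, t.
Qed.
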